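(* Let $\gamma\in(0,1)$, $\mathcal{S}=\{s_0,s_1\}$, $\mathcal{A}=\{a_0,a_1\}$, $d_0=(1/2,1/2)$, and $\mathcal{R}(s,a)=\mathbb{1}\{s=s_0,a=a_0\}+\mathbb{1}\{s=s_1,a=a_1\}$. Let $\hat\Pi=\{\pi_0,\pi_1,\pi_2\}$ where $\pi_0$ plays $a_0$ at both states, $\pi_1$ plays $a_0$ at $s_0$ and $a_1$ at $s_1$, and $\pi_2$ plays $a_1$ at $s_0$ and $a_0$ at $s_1$ (deterministically). Then: (i) for every transition model $\mathcal{T}$, the discounted visit counts $\mathcal{F}^{\pi_0}_{\mathcal{T}},\mathcal{F}^{\pi_1}_{\mathcal{T}},\mathcal{F}^{\pi_2}_{\mathcal{T}}$ are not collinear; (ii) for every transition model $\mathcal{T}$, $\frac{1}{1-\gamma}=J_{\mathcal{T}}(\pi_1)>J_{\mathcal{T}}(\pi_0)>J_{\mathcal{T}}(\pi_2)=0$. Consequently every pair of transition models is equivalent on $\hat\Pi$, so there is no pair of transition models that is non-trivial, non-equivalent and unexploitable on $\hat\Pi$ for this task.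
   Context: Discounted visit counts: $\mathcal{F}^\pi_{\mathcal{T}}(s,a)=\mathbb{E}\big[\sum_{t\ge0}\gamma^t\mathbb{1}(s_t=s,a_t=a)\big]$ with $s_0\sim d_0$, $a_t\sim\pi(\cdot\mid s_t)$, $s_{t+1}\sim\mathcal{T}(\cdot\mid s_t,a_t)$; value $J_{\mathcal{T}}(\pi)=\langle\mathcal{R},\mathcal{F}^\pi_{\mathcal{T}}\rangle$. Collinear means all the vectors lie on a single line in $\mathbb{R}^{|\mathcal{S}||\mathcal{A}|}$. $J$ is trivial on $\Pi$ if constant on $\Pi$; $J_1,J_2$ are equivalent on $\Pi$ if for all $\pi,\pi'\in\Pi$, $J_1(\pi)\ge J_1(\pi')\iff J_2(\pi)\ge J_2(\pi')$. $(\mathcal{T},\mathcal{T}')$ is exploitable relative to $\Pi$ if there are $\pi,\pi'\in\Pi$ with $J_{\mathcal{T}}(\pi)>J_{\mathcal{T}}(\pi')$ and $J_{\mathcal{T}'}(\pi')>J_{\mathcal{T}'}(\pi)$; otherwise unexploitable. A pair of transition models is called non-trivial/non-equivalent on $\Pi$ if both induced value functions are non-trivial on $\Pi$ / they are not equivalent on $\Pi$. *)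

From Stdlib Require Import Reals.
From Coquelicot Require Import Coquelicot.
Open Scope R_scope.

Inductive state := s0 | s1.
Inductive action := a0 | a1.

Definition sumS (f : state -> R) : R := f s0 + f s1.
Definition sumA (f : action -> R) : R := f a0 + f a1.

(* A transition model T s a s' = probability of moving to s' from s under a. *)
Definition transition := state -> action -> state -> R.
Definition is_transition (T : transition) : Prop :=
  forall s a, (forall s', 0 <= T s a s') /\ sumS (T s a) = 1.

Definition policy := state -> action -> R.

Definition d0 (s : state) : R := 1 / 2.

Definition reward (s : state) (a : action) : R :=
  match s, a with
  | s0, a0 => 1
  | s1, a1 => 1
  | _, _ => 0
  end.

Fixpoint mu (T : transition) (pi : policy) (t : nat) (s' : state) : R :=
  match t with
  | O => d0 s'
  | S t => sumS (fun s => sumA (fun a => mu T pi t s * pi s a * T s a s'))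
  end.

Definition visits (gamma : R) (T : transition) (pi : policy) (s : state) (a : action) : R :=
  Series (fun t => gamma ^ t * (mu T pi t s * pi s a)).

Definition J (gamma : R) (T : transition) (pi : policy) : R :=
  sumS (fun s => sumA (fun a => reward s a * visits gamma T pi s a)).

Definition det (f : state -> action) : policy :=
  fun s a => if (match f s, a with a0, a0 | a1, a1 => true | _, _ => false end) then 1 else 0.

Definition pi0 : policy := det (fun _ => a0).
Definition pi1 : policy := det (fun s => match s with s0 => a0 | s1 => a1 end).
Definition pi2 : policy := det (fun s => match s with s0 => a1 | s1 => a0 end).

Definition Pihat (pi : policy) : Prop := pi = pi0 \/ pi = pi1 \/ pi = pi2.

Definition collinear3 (F1 F2 F3 : state -> action -> R) : Prop :=
  exists (p v : state -> action -> R),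
    forall F, (F = F1 \/ F = F2 \/ F = F3) ->
      exists c : R, forall s a, F s a = p s a + c * v s a.

Definition trivial_on (Pi : policy -> Prop) (Jf : policy -> R) : Prop :=
  forall pi pi', Pi pi -> Pi pi' -> Jf pi = Jf pi'.

Definition equivalent_on (Pi : policy -> Prop) (J1 J2 : policy -> R) : Prop :=
  forall pi pi', Pi pi -> Pi pi' -> (J1 pi >= J1 pi' <-> J2 pi >= J2 pi').

Definition exploitable (gamma : R) (Pi : policy -> Prop) (T T' : transition) : Prop :=
  exists pi pi', Pi pi /\ Pi pi' /\
    J gamma T pi > J gamma T pi' /\ J gamma T' pi' > J gamma T' pi.

(* Every state distribution mu_t is a probability vector, so for a
   deterministic policy the visits along the played actions add up to
   sum_t gamma^t = 1/(1-gamma), while a played action has a visit count of at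
   least 1/2 (from t = 0, as d0 is uniform) and an unplayed one has count 0.
   Hence J(pi1) counts all the mass, J(pi2) none, and J(pi0) strictly in
   between, whatever the transition model; so all value functions order
   Pihat the same way.  For non-collinearity: on a line p + c v, two points
   agreeing on a coordinate where a third point differs must coincide; pi0 and
   pi1 agree (both 0) on (s0,a1), where pi2 is positive, but differ on
   (s1,a1). *)
From Stdlib Require Import Reals Lra.
From Coquelicot Require Import Coquelicot.
Open Scope R_scope.

Definition is_policy (pi : policy) : Prop :=
  forall s, 0 <= pi s a0 /\ 0 <= pi s a1 /\ pi s a0 + pi s a1 = 1.

Lemma det_is_policy (f : state -> action) : is_policy (det f).
Proof. intros s; unfold det; destruct (f s); lra. Qed.

Lemma policy_bounds (pi : policy) (s : state) (a : action) :
  is_policy pi -> 0 <= pi s a <= 1.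
Proof. intros Hp; destruct (Hp s) as (? & ? & ?); destruct a; lra. Qed.

Section StateDistribution.

Variables (T : transition) (pi : policy).
Hypotheses (HT : is_transition T) (Hp : is_policy pi).

Lemma mu_distribution (t : nat) :
  0 <= mu T pi t s0 /\ 0 <= mu T pi t s1 /\ mu T pi t s0 + mu T pi t s1 = 1.
Proof.
  induction t as [|t (M0 & M1 & Msum)]; cbn; unfold d0; [lra|].
  unfold sumS, sumA.
  assert (Tnn : forall s a s', 0 <= T s a s') by (intros s a; apply HT).
  pose proof (policy_bounds pi s0 a0 Hp); pose proof (policy_bounds pi s0 a1 Hp).
  pose proof (policy_bounds pi s1 a0 Hp); pose proof (policy_bounds pi s1 a1 Hp).
  repeat split;
    try (repeat apply Rplus_le_le_0_compat; repeat apply Rmult_le_pos; auto; lra).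
  assert (Ts1 : forall s a, T s a s1 = 1 - T s a s0).
  { intros s a; destruct (HT s a) as (_ & Tsum); unfold sumS in Tsum; lra. }
  assert (pa1 : forall s, pi s a1 = 1 - pi s a0).
  { intros s; destruct (Hp s) as (_ & _ & Psum); lra. }
  replace (mu T pi t s1) with (1 - mu T pi t s0) by lra.
  rewrite !Ts1, !pa1.
  ring.
Qed.

Lemma mu_bounds (t : nat) (s : state) : 0 <= mu T pi t s <= 1.
Proof. destruct (mu_distribution t) as (? & ? & ?); destruct s; lra. Qed.

End StateDistribution.

Lemma Series_0 : Series (fun _ => 0) = 0.
Proof.
  rewrite (Series_ext _ (fun _ => 0 * 0)) by (intros; ring).
  rewrite Series_scal_l; ring.
Qed.

Lemma Series_nonneg (u : nat -> R) :
  (forall n, 0 <= u n) -> ex_series u -> 0 <= Series u.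
Proof. intros Hu Hex; rewrite <- Series_0; apply Series_le; auto with real. Qed.

Lemma is_series_geom_pos (g : R) :
  0 < g < 1 -> is_series (fun n => g ^ n) (1 / (1 - g)).
Proof.
  intros Hg; unfold Rdiv; rewrite Rmult_1_l.
  apply is_series_geom; rewrite Rabs_pos_eq; lra.
Qed.

Section VisitCounts.

Variables (g : R) (T : transition) (pi : policy).
Hypotheses (Hg : 0 < g < 1) (HT : is_transition T) (Hp : is_policy pi).

Lemma visit_term_bounds (s : state) (a : action) (t : nat) :
  0 <= g ^ t * (mu T pi t s * pi s a) <= g ^ t.
Proof.
  pose proof (mu_bounds T pi HT Hp t s); pose proof (policy_bounds pi s a Hp).
  assert (0 < g ^ t) by (apply pow_lt; lra).
  split; [apply Rmult_le_pos; [lra | apply Rmult_le_pos; lra]|].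
  rewrite <- (Rmult_1_r (g ^ t)) at 2; apply Rmult_le_compat_l; [lra|].
  rewrite <- (Rmult_1_r 1); apply Rmult_le_compat; lra.
Qed.

Lemma ex_series_visits (s : state) (a : action) :
  ex_series (fun t => g ^ t * (mu T pi t s * pi s a)).
Proof.
  apply (@ex_series_le R_AbsRing R_CompleteNormedModule _ (fun t => g ^ t)).
  - intros t; change norm with Rabs; cbn.
    destruct (visit_term_bounds s a t); rewrite Rabs_pos_eq; lra.
  - eexists; apply (is_series_geom_pos g Hg).
Qed.

Lemma visits_gt0 (s : state) (a : action) : pi s a = 1 -> 0 < visits g T pi s a.
Proof.
  intros Hplay; unfold visits.
  rewrite Series_incr_1 by apply ex_series_visits.
  cbv beta; rewrite pow_O; change (mu T pi 0 s) with (1 / 2).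
  assert (0 <= Series (fun t => g ^ S t * (mu T pi (S t) s * pi s a))).
  { apply Series_nonneg; [intros t; apply visit_term_bounds|].
    apply (ex_series_incr_1 (fun t => g ^ t * (mu T pi t s * pi s a))).
    apply ex_series_visits. }
  rewrite Hplay in *; lra.
Qed.

Lemma visits_played_sum (b0 b1 : action) :
  pi s0 b0 = 1 -> pi s1 b1 = 1 ->
  visits g T pi s0 b0 + visits g T pi s1 b1 = 1 / (1 - g).
Proof.
  intros H0 H1; unfold visits.
  rewrite <- Series_plus by apply ex_series_visits.
  rewrite (Series_ext _ (fun t => g ^ t)).
  - apply is_series_unique, (is_series_geom_pos g Hg).
  - intros t; rewrite H0, H1.
    destruct (mu_distribution T pi HT Hp t) as (_ & _ & Msum).
    replace (mu T pi t s1) with (1 - mu T pi t s0) by lra; ring.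
Qed.

End VisitCounts.

Lemma visits_eq0 (g : R) (T : transition) (pi : policy) (s : state) (a : action) :
  pi s a = 0 -> visits g T pi s a = 0.
Proof.
  intros H; unfold visits; rewrite <- Series_0; apply Series_ext.
  intros t; rewrite H; ring.
Qed.

Lemma J_order (g : R) (T : transition) : 0 < g < 1 -> is_transition T ->
  1 / (1 - g) = J g T pi1 /\ J g T pi1 > J g T pi0 /\
  J g T pi0 > J g T pi2 /\ J g T pi2 = 0.
Proof.
  intros Hg HT; unfold J, sumS, sumA; cbn [reward].
  rewrite (visits_eq0 g T pi0 s1 a1), (visits_eq0 g T pi2 s0 a0),
    (visits_eq0 g T pi2 s1 a1) by reflexivity.
  pose proof (visits_played_sum g T pi1 Hg HT (det_is_policy _) a0 a1 eq_refl eq_refl).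
  pose proof (visits_played_sum g T pi0 Hg HT (det_is_policy _) a0 a0 eq_refl eq_refl).
  pose proof (visits_gt0 g T pi0 Hg HT (det_is_policy _) s0 a0 eq_refl).
  pose proof (visits_gt0 g T pi0 Hg HT (det_is_policy _) s1 a0 eq_refl).
  lra.
Qed.

Lemma collinear3_agree (F1 F2 F3 : state -> action -> R) (s : state) (a : action) :
  collinear3 F1 F2 F3 -> F1 s a = F2 s a -> F3 s a <> F1 s a ->
  forall s' a', F1 s' a' = F2 s' a'.
Proof.
  intros (p & v & Hline) E12 N31 s' a'.
  destruct (Hline F1 (or_introl eq_refl)) as (c1 & H1).
  destruct (Hline F2 (or_intror (or_introl eq_refl))) as (c2 & H2).
  destruct (Hline F3 (or_intror (or_intror eq_refl))) as (c3 & H3).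
  assert (Hv : v s a <> 0).
  { intros Hv; apply N31; rewrite H1, H3, Hv; ring. }
  assert (Hc : c1 = c2).
  { rewrite H1, H2 in E12; apply (Rmult_eq_reg_r (v s a)); lra. }
  rewrite H1, H2, Hc; reflexivity.
Qed.

Lemma visits_not_collinear (g : R) (T : transition) : 0 < g < 1 -> is_transition T ->
  ~ collinear3 (visits g T pi0) (visits g T pi1) (visits g T pi2).
Proof.
  intros Hg HT Hcol.
  assert (Hs1 : visits g T pi0 s1 a1 = visits g T pi1 s1 a1).
  { apply (collinear3_agree _ _ _ s0 a1 Hcol).
    - rewrite !visits_eq0 by reflexivity; reflexivity.
    - rewrite (visits_eq0 g T pi0) by reflexivity.
      apply Rgt_not_eq, (visits_gt0 g T pi2 Hg HT (det_is_policy _)); reflexivity. }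
  rewrite (visits_eq0 g T pi0) in Hs1 by reflexivity.
  pose proof (visits_gt0 g T pi1 Hg HT (det_is_policy _) s1 a1 eq_refl); lra.
Qed.

Lemma equivalent_on_Pihat (g : R) (T T' : transition) :
  0 < g < 1 -> is_transition T -> is_transition T' ->
  equivalent_on Pihat (J g T) (J g T').
Proof.
  intros Hg HT HT' pi pi' Hpi Hpi'.
  pose proof (J_order g T Hg HT); pose proof (J_order g T' Hg HT').
  destruct Hpi as [-> | [-> | ->]]; destruct Hpi' as [-> | [-> | ->]];
    split; intros; lra.
Qed.

Theorem mainTheorem5 (gamma : R) (hg0 : 0 < gamma) (hg1 : gamma < 1) :
  (forall T : transition, is_transition T ->
     ~ collinear3 (visits gamma T pi0) (visits gamma T pi1) (visits gamma T pi2)) /\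
  (forall T : transition, is_transition T ->
     1 / (1 - gamma) = J gamma T pi1 /\ J gamma T pi1 > J gamma T pi0 /\
     J gamma T pi0 > J gamma T pi2 /\ J gamma T pi2 = 0) /\
  (forall T T' : transition, is_transition T -> is_transition T' ->
     equivalent_on Pihat (J gamma T) (J gamma T')) /\
  ~ (exists T T' : transition, is_transition T /\ is_transition T' /\
       ~ trivial_on Pihat (J gamma T) /\ ~ trivial_on Pihat (J gamma T') /\
       ~ equivalent_on Pihat (J gamma T) (J gamma T') /\
       ~ exploitable gamma Pihat T T').
Proof.
  assert (Hg : 0 < gamma < 1) by lra.
  split; [|split; [|split]].
  - intros T HT; exact (visits_not_collinear gamma T Hg HT).
  - intros T HT; exact (J_order gamma T Hg HT).
  - intros T T' HT HT'; exact (equivalent_on_Pihat gamma T T' Hg HT HT').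
  - intros (T & T' & HT & HT' & _ & _ & Hnot_equiv & _).
    exact (Hnot_equiv (equivalent_on_Pihat gamma T T' Hg HT HT')).
Qed.
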